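(* Let $\mathcal{U}$ be a separable Banach space with dual $\mathcal{U}^*$ and duality pairing $[\cdot,\cdot]$, endowed with a quadratic norm given by a linear bijection $\mathcal{K}:\mathcal{U}^*\to\mathcal{U}$ which is symmetric and positive, $\|u\|^2=[\mathcal{K}^{-1}u,u]$. Let $\phi_1,\dots,\phi_N\in\mathcal{U}^*$ be nontrivial, $\boldsymbol{\phi}=(\phi_1,\dots,\phi_N)$, and $\Theta\in\mathbb{R}^{N\times N}$ with $\Theta_{i,n}=[\phi_i,\mathcal{K}\phi_n]$, assumed invertible; let $\chi_i=\sum_{n=1}^N(\Theta^{-1})_{i,n}\mathcal{K}\phi_n$. Let $G:\mathbb{R}^N\to\mathbb{R}^I$ and $F:\mathbb{R}^N\to\mathbb{R}^M$ be (possibly nonlinear) functions, $\gamma$ a nonzero real parameter, and fix $(\mathbf{o},\mathbf{y})\in\mathbb{R}^I\times\mathbb{R}^M$. Then $u^\dagger\in\mathcal{U}$ is a minimizer of $$\min_{u\in\mathcal{U}}\ \|u\|^2+\frac{1}{\gamma^2}|G([\boldsymbol{\phi},u])-\mathbf{o}|^2\quad\text{s.t.}\quad F([\boldsymbol{\phi},u])=\mathbf{y}$$ if and only if $u^\dagger=\sum_{n=1}^N z^\dagger_n\chi_n$ where $\mathbf{z}^\dagger$ is a minimizer of $$\min_{\mathbf{z}\in\mathbb{R}^N}\ \mathbf{z}^T\Theta^{-1}\mathbf{z}+\frac{1}{\gamma^2}|G(\mathbf{z})-\mathbf{o}|^2\quad\text{s.t.}\quad F(\mathbf{z})=\mathb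f{y}.$$
   Context: Symmetric means $[\mathcal{K}\phi,\varphi]=[\mathcal{K}\varphi,\phi]$ and positive means $[\mathcal{K}\phi,\phi]>0$ for $\phi\ne0$. $[\boldsymbol{\phi},u]$ denotes the vector $([\phi_1,u],\dots,[\phi_N,u])\in\mathbb{R}^N$; $|\cdot|$ is the Euclidean norm. *)

From HB Require Import structures.
From mathcomp Require Import all_boot all_order all_algebra.
From mathcomp Require Import all_classical all_reals all_analysis.
Set Implicit Arguments. Unset Strict Implicit. Unset Printing Implicit Defensive.
Import Order.TTheory GRing.Theory Num.Theory.
Import numFieldNormedType.Exports.
Local Open Scope classical_set_scope.
Local Open Scope ring_scope.

Definition separable (T : topologicalType) : Prop :=
  exists D : set T, countable D /\ dense D.

(* Elements of the topological dual U^*: continuous linear functionals U -> R.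
   The duality pairing [f, u] is just application f u. *)
Definition is_dual (R : realType) (U : normedModType R) (f : U -> R) : Prop :=
  (forall (a : R) (x y : U), f (a *: x + y) = a * f x + f y) /\ continuous f.

Definition fadd (R : realType) (U : normedModType R) (f g : U -> R) : U -> R :=
  fun x => f x + g x.
Definition fscale (R : realType) (U : normedModType R) (a : R) (f : U -> R)
  : U -> R := fun x => a * f x.

Definition K_linear (R : realType) (U : normedModType R) (K : (U -> R) -> U) :=
  forall (a : R) (f g : U -> R), is_dual f -> is_dual g ->
    K (fadd (fscale a f) g) = a *: K f + K g.
Definition K_bijective (R : realType) (U : normedModType R) (K : (U -> R) -> U) :=
  (forall f g : U -> R, is_dual f -> is_dual g -> K f = K g -> f = g) /\
  (forall u : U, exists f : U -> R, is_dual f /\ K f = u).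
Definition K_symmetric (R : realType) (U : normedModType R) (K : (U -> R) -> U) :=
  forall f g : U -> R, is_dual f -> is_dual g -> f (K g) = g (K f).
Definition K_positive (R : realType) (U : normedModType R) (K : (U -> R) -> U) :=
  forall f : U -> R, is_dual f -> f <> (fun _ => 0) -> 0 < f (K f).
(* ||u||^2 = [K^{-1} u, u], where K^{-1} u is the unique dual element f with K f = u *)
Definition K_induces_norm (R : realType) (U : normedModType R) (K : (U -> R) -> U) :=
  forall f : U -> R, is_dual f -> `|K f| ^+ 2 = f (K f).

Definition pairv (R : realType) (U : normedModType R) (N : nat)
  (phi : 'I_N -> U -> R) (u : U) : 'cV[R]_N := \col_i phi i u.

Definition Theta (R : realType) (U : normedModType R) (N : nat)
  (K : (U -> R) -> U) (phi : 'I_N -> U -> R) : 'M[R]_N :=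
  \matrix_(i, n) phi i (K (phi n)).

Definition chi (R : realType) (U : normedModType R) (N : nat)
  (K : (U -> R) -> U) (phi : 'I_N -> U -> R) (i : 'I_N) : U :=
  \sum_(n < N) (invmx (Theta K phi)) i n *: K (phi n).

Definition sqnorm (R : realType) (m : nat) (x : 'cV[R]_m) : R :=
  \sum_(i < m) (x i 0) ^+ 2.

Definition is_minimizer (R : realType) (A : Type) (C : A -> Prop) (J : A -> R)
  (a : A) : Prop := C a /\ (forall b, C b -> J a <= J b).

From HB Require Import structures.
From mathcomp Require Import all_boot all_order all_algebra.
From mathcomp Require Import all_classical all_reals all_analysis.
From mathcomp Require Import ring lra.
Import Order.TTheory GRing.Theory Num.Theory.
Import numFieldNormedType.Exports.
Local Open Scope classical_set_scope.
Local Open Scope ring_scope.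

(* The interpolant v = sum_n [phi_n, u] chi_n of u is K g for a functional g
   in the span of the phi_n, and [phi, v] = [phi, u], so g u = g v.  With
   ||K h||^2 = [h, K h] and the symmetry of K this gives the Pythagorean
   identity ||u||^2 = ||v||^2 + ||u - v||^2, while ||sum_n z_n chi_n||^2 =
   z^T Theta^-1 z.  Replacing u by its interpolant thus keeps the constraint
   and the misfit term and strictly decreases the norm unless u = v.  Only
   the dependence of the constraint and the misfit on [phi, u] matters. *)

Section Duality.
Context {R : realType} {U : normedModType R}.

Lemma dualD (f : U -> R) (x y : U) : is_dual f -> f (x + y) = f x + f y.
Proof. by case=> lin_f _; rewrite -[x]scale1r lin_f mul1r scale1r. Qed.

Lemma dual0 (f : U -> R) : is_dual f -> f 0 = 0.
Proof. by move=> df; have := dualD f 0 0 df; rewrite addr0; lra. Qed.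

Lemma dualZ (f : U -> R) (a : R) (x : U) : is_dual f -> f (a *: x) = a * f x.
Proof. by move=> df; rewrite -[a *: x]addr0 (proj1 df) dual0 // addr0. Qed.

Lemma dualB (f : U -> R) (x y : U) : is_dual f -> f (x - y) = f x - f y.
Proof. by move=> df; rewrite dualD // -scaleN1r dualZ // mulN1r. Qed.

Lemma dual_sum (f : U -> R) {J : Type} (r : seq J) (P : pred J) (c : J -> U) :
  is_dual f -> f (\sum_(j <- r | P j) c j) = \sum_(j <- r | P j) f (c j).
Proof.
move=> df; elim: r => [|j r IHr]; first by rewrite !big_nil dual0.
by rewrite !big_cons; case: (P j); rewrite ?dualD ?IHr.
Qed.

Lemma is_dual0 : is_dual (fun _ : U => 0 : R).
Proof. by split=> [a x y|]; [rewrite mulr0 addr0 | exact: cst_continuous]. Qed.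

Lemma is_dual_fadd_fscale (a : R) (f g : U -> R) :
  is_dual f -> is_dual g -> is_dual (fadd (fscale a f) g).
Proof.
move=> [lin_f cont_f] [lin_g cont_g]; split=> [b x y|].
  by rewrite /fadd /fscale lin_f lin_g; ring.
move=> x; apply: continuousD; last exact: cont_g.
by apply: continuousM; [exact: cst_continuous | exact: cont_f].
Qed.

Definition lincomb {J : Type} (r : seq J) (w : J -> R) (phi : J -> U -> R)
  : U -> R := fun x => \sum_(j <- r) w j * phi j x.

Lemma lincomb_cons {J : Type} (j : J) (r : seq J) (w : J -> R)
    (phi : J -> U -> R) :
  lincomb (j :: r) w phi = fadd (fscale (w j) (phi j)) (lincomb r w phi).
Proof. by apply: funext => x; rewrite /lincomb big_cons. Qed.

Lemma is_dual_lincomb {J : Type} (r : seq J) (w : J -> R) (phi : J -> U -> R) :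
  (forall j, is_dual (phi j)) -> is_dual (lincomb r w phi).
Proof.
move=> dphi; elim: r => [|j r IHr].
  rewrite (_ : lincomb _ _ _ = fun _ => 0); first exact: is_dual0.
  by apply: funext => x; rewrite /lincomb big_nil.
by rewrite lincomb_cons; exact: is_dual_fadd_fscale.
Qed.

Lemma pairvE (N : nat) (phi : 'I_N -> U -> R) (u : U) (i : 'I_N) (j : 'I_1) :
  pairv phi u i j = phi i u.
Proof. exact: mxE. Qed.

End Duality.

Section Representer.
Variables (R : realType) (U : normedModType R) (K : (U -> R) -> U).
Hypotheses (K_lin : K_linear K) (K_sym : K_symmetric K) (K_norm : K_induces_norm K).

Lemma K0 : K (fun _ => 0) = 0.
Proof.
have := K_lin 1 _ _ is_dual0 is_dual0.
rewrite (_ : fadd _ _ = fun _ => 0); last first.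
  by apply: funext => x; rewrite /fadd /fscale mulr0 addr0.
rewrite scale1r => /(congr1 (fun v => v - K (fun _ => 0))).
by rewrite /= subrr addrK => <-.
Qed.

Lemma K_lincomb {J : Type} (r : seq J) (w : J -> R) (phi : J -> U -> R) :
  (forall j, is_dual (phi j)) -> K (lincomb r w phi) = \sum_(j <- r) w j *: K (phi j).
Proof.
move=> dphi; elim: r => [|j r IHr].
  by rewrite big_nil -K0; congr K; apply: funext => x; rewrite /lincomb big_nil.
by rewrite lincomb_cons K_lin ?IHr ?big_cons //; exact: is_dual_lincomb.
Qed.

(* K g is the orthogonal projection of u onto the line spanned by K g as soon
   as g does not distinguish u from K g. *)
Lemma norm_pythagoras (g : U -> R) (u : U) :
  (exists f, is_dual f /\ K f = u) -> is_dual g -> g u = g (K g) ->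
  `|u| ^+ 2 = `|K g| ^+ 2 + `|u - K g| ^+ 2.
Proof.
move=> [f [df Kf]] dg gu_gKg.
have dh := is_dual_fadd_fscale (-1) g f dg df.
have Kh : K (fadd (fscale (-1) g) f) = u - K g by rewrite K_lin // Kf scaleN1r addrC.
have fu : f u = `|u| ^+ 2 by rewrite -Kf K_norm.
have fKg : f (K g) = g u by rewrite K_sym // Kf.
have gKg : g (K g) = `|K g| ^+ 2 by rewrite K_norm.
have := K_norm _ dh; rewrite Kh /fadd /fscale (dualB g) ?(dualB f) //.
by rewrite fu fKg gu_gKg gKg; lra.
Qed.

End Representer.

Definition interp {R : realType} {U : normedModType R} {N : nat}
  (K : (U -> R) -> U) (phi : 'I_N -> U -> R) (z : 'cV[R]_N) : U :=
  \sum_(n < N) z n 0 *: chi K phi n.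

Section Interpolation.
Variables (R : realType) (U : normedModType R) (K : (U -> R) -> U).
Variables (N : nat) (phi : 'I_N -> U -> R).
Hypotheses (K_lin : K_linear K) (K_surj : forall u, exists f, is_dual f /\ K f = u).
Hypotheses (K_sym : K_symmetric K) (K_norm : K_induces_norm K).
Hypotheses (dphi : forall i, is_dual (phi i)) (Theta_unit : Theta K phi \in unitmx).

Local Notation interp := (interp K phi).
Local Notation coef z := (z^T *m invmx (Theta K phi)) (only parsing).

Lemma interpE (z : 'cV[R]_N) :
  interp z = K (lincomb (index_enum 'I_N) (coef z 0) phi).
Proof.
rewrite K_lincomb // /interp /chi; under eq_bigr do rewrite scaler_sumr.
rewrite exchange_big; apply: eq_bigr => m _; rewrite mxE scaler_suml.
by apply: eq_bigr => n _; rewrite scalerA mxE.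
Qed.

Lemma phi_interp (z : 'cV[R]_N) (i : 'I_N) : phi i (interp z) = z i 0.
Proof.
rewrite interpE K_lincomb // dual_sum //.
have -> : z i 0 = (z^T *m invmx (Theta K phi) *m Theta K phi) 0 i.
  by rewrite -mulmxA mulVmx // mulmx1 mxE.
rewrite mxE; apply: eq_bigr => m _.
by rewrite dualZ // !mxE (K_sym _ _ (dphi i) (dphi m)).
Qed.

Lemma pairv_interp (z : 'cV[R]_N) : pairv phi (interp z) = z.
Proof. by apply/matrixP => i j; rewrite (ord1 j) mxE phi_interp. Qed.

Lemma norm_interp (z : 'cV[R]_N) :
  `|interp z| ^+ 2 = (z^T *m invmx (Theta K phi) *m z) 0 0.
Proof.
rewrite interpE K_norm; last exact: is_dual_lincomb.
rewrite -interpE [RHS]mxE; apply: eq_bigr => m _.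
by rewrite phi_interp.
Qed.

Lemma norm_pythagoras_interp (u : U) :
  `|u| ^+ 2 = `|interp (pairv phi u)| ^+ 2 + `|u - interp (pairv phi u)| ^+ 2.
Proof.
rewrite interpE; apply: norm_pythagoras => //; first exact: is_dual_lincomb.
rewrite -interpE /lincomb; apply: eq_bigr => m _.
by rewrite phi_interp pairvE.
Qed.

Lemma norm_interp_pairv_le (u : U) : `|interp (pairv phi u)| ^+ 2 <= `|u| ^+ 2.
Proof. by rewrite [leRHS]norm_pythagoras_interp lerDl sqr_ge0. Qed.

Lemma interp_pairv_eq (u : U) :
  `|u| ^+ 2 <= `|interp (pairv phi u)| ^+ 2 -> u = interp (pairv phi u).
Proof.
rewrite [leLHS]norm_pythagoras_interp gerDl => le0; apply/eqP; rewrite -subr_eq0.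
by rewrite -normr_eq0 -sqrf_eq0 eq_le le0 sqr_ge0.
Qed.

Lemma minimizer_interp (C : 'cV[R]_N -> Prop) (L : 'cV[R]_N -> R) (udag : U) :
  is_minimizer (fun u => C (pairv phi u)) (fun u => `|u| ^+ 2 + L (pairv phi u)) udag
  <->
  exists zdag, is_minimizer C
    (fun z => (z^T *m invmx (Theta K phi) *m z) 0 0 + L z) zdag /\ udag = interp zdag.
Proof.
split=> [[Cu min_u] | [z [[Cz min_z] ->]]].
  have udagE : udag = interp (pairv phi udag).
    apply: interp_pairv_eq; move: (min_u (interp (pairv phi udag))).
    by rewrite pairv_interp => /(_ Cu); rewrite lerD2r.
  exists (pairv phi udag); split=> //; split=> // z Cz.
  have := min_u (interp z); rewrite pairv_interp => /(_ Cz).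
  by rewrite {1}udagE !norm_interp.
split=> [|u Cu]; first by rewrite pairv_interp.
rewrite pairv_interp norm_interp; apply: le_trans (min_z _ Cu) _.
by rewrite -norm_interp lerD2r norm_interp_pairv_le.
Qed.

End Interpolation.

Theorem proposition2p3 (R : realType) (U : completeNormedModType R)
  (K : (U -> R) -> U) (N I M : nat) (phi : 'I_N -> U -> R)
  (G : 'cV[R]_N -> 'cV[R]_I) (F : 'cV[R]_N -> 'cV[R]_M) (gamma : R)
  (o : 'cV[R]_I) (y : 'cV[R]_M) (udag : U) :
  separable U ->
  K_linear K -> K_bijective K -> K_symmetric K -> K_positive K ->
  K_induces_norm K ->
  (forall i, is_dual (phi i)) ->
  (forall i, phi i <> (fun _ => 0)) ->
  Theta K phi \in unitmx ->
  gamma != 0 ->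
  is_minimizer (fun u : U => F (pairv phi u) = y)
    (fun u : U => `|u| ^+ 2 + gamma ^- 2 * sqnorm (G (pairv phi u) - o)) udag
  <->
  exists zdag : 'cV[R]_N,
    is_minimizer (fun z : 'cV[R]_N => F z = y)
      (fun z : 'cV[R]_N =>
         (z^T *m invmx (Theta K phi) *m z) 0 0 + gamma ^- 2 * sqnorm (G z - o))
      zdag
    /\ udag = \sum_(n < N) zdag n 0 *: chi K phi n.
Proof.
move=> _ K_lin [_ K_surj] K_sym _ K_norm dphi _ Theta_unit _.
exact: (minimizer_interp _ _ _ _ _ K_lin K_surj K_sym K_norm dphi Theta_unit
          (fun z => F z = y) (fun z => gamma ^- 2 * sqnorm (G z - o))).
Qed.
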